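(* Fix $x,y>0$. As a function of the pair $(r,s)$, the extended mean value $E(r,s;x,y)$ is Schur-concave on $[0,\infty)\times[0,\infty)$ and Schur-convex on $(-\infty,0]\times(-\infty,0]$.
   Context: For $x,y>0$ and $r,s\in\mathbb{R}$ the extended mean values are defined by $E(r,s;x,y)=\bigl(\frac{r}{s}\cdot\frac{y^s-x^s}{y^r-x^r}\bigr)^{1/(s-r)}$ if $rs(r-s)(x-y)\neq0$; $E(r,0;x,y)=E(0,r;x,y)=\bigl(\frac1r\cdot\frac{y^r-x^r}{\ln y-\ln x}\bigr)^{1/r}$ if $r(x-y)\neq0$; $E(r,r;x,y)=e^{-1/r}\bigl(\frac{x^{x^r}}{y^{y^r}}\bigr)^{1/(x^r-y^r)}$ if $r(x-y)\neq0$; $E(0,0;x,y)=\sqrt{xy}$ if $x\neq y$; $E(r,s;x,x)=x$. A function $f$ of two real variables defined on $I\times I$ ($I$ an interval) is Schur-convex if $f(r,s)\le f(r',s')$ whenever $(r,s),(r',s')\in I^2$ satisfy $(r,s)\prec(r',s')$, meaning $r+s=r'+s'$ and $\max\{r,s\}\le\max\{r',s'\}$; $f$ is Schur-concave if $-f$ is Schur-convex. *)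

From Stdlib Require Import Reals Lra.
Open Scope R_scope.

Definition E (r s x y : R) : R :=
  if Req_EM_T x y then x else
  if Req_EM_T r 0 then
    (if Req_EM_T s 0 then sqrt (x * y)
     else Rpower (/ s * ((Rpower y s - Rpower x s) / (ln y - ln x))) (/ s))
  else if Req_EM_T s 0 then
    Rpower (/ r * ((Rpower y r - Rpower x r) / (ln y - ln x))) (/ r)
  else if Req_EM_T r s then
    exp (- / r) *
      Rpower (Rpower x (Rpower x r) / Rpower y (Rpower y r))
             (/ (Rpower x r - Rpower y r))
  else
    Rpower ((r / s) * ((Rpower y s - Rpower x s) / (Rpower y r - Rpower x r)))
           (/ (s - r)).

Definition majorized (r s r' s' : R) : Prop :=
  r + s = r' + s' /\ Rmax r s <= Rmax r' s'.

Definition SchurConvex (I : R -> Prop) (f : R -> R -> R) : Prop :=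
  forall r s r' s', I r -> I s -> I r' -> I s' ->
    majorized r s r' s' -> f r s <= f r' s'.

Definition SchurConcave (I : R -> Prop) (f : R -> R -> R) : Prop :=
  SchurConvex I (fun r s => - f r s).

From Stdlib Require Import Reals Lra Psatz.
From Coquelicot Require Import Coquelicot.
Open Scope R_scope.

(* With a = ln x, b = ln y (a <> b) put psi(t) = ln ((e^{tb} - e^{ta}) / (t (b-a)))
   and psi(0) = 0.  Away from the point (0,0), E(r,s;x,y) is the exponential of
   the divided difference (psi(s) - psi(r)) / (s - r), read as psi'(r) when r = s.

   1. General fact (section DividedDifference): if F is C^2 on (0,oo), continuous
      at 0, and F'' is nonincreasing there, then the divided difference of F is
      Schur-concave on [0,oo)^2.  Writing r, s = m -+ d, the divided difference is
      the centered chord slope (F(m+d) - F(m-d)) / 2d, and two applications of the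
      mean value theorem show that it decreases as the half-width d grows.
   2. For our psi, psi''(t) = k^2 g(kt) with k = (b-a)/2 and g(w) = 1/w^2 - 1/sinh^2 w;
      g is even and nonincreasing on (0,oo) because w^3 cosh w <= sinh^3 w.
   3. Step 1 applied to psi gives Schur-concavity on [0,oo)^2; the reflection
      E(r,s;x,y) = 1 / E(-r,-s;1/x,1/y) transfers it to Schur-convexity on
      (-oo,0]^2, since negation preserves majorization of pairs. *)

Lemma mvt_open (f f' : R -> R) (a b : R) :
  a < b -> (forall c, a < c < b -> is_derive f c (f' c)) ->
  (forall c, a <= c <= b -> continuity_pt f c) ->
  exists c, a < c < b /\ f b - f a = f' c * (b - a).
Proof.
  intros Hab Hd Hc.
  assert (Hd' : forall c, a < c < b -> derivable_pt_lim f c (f' c))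
    by (intros c Pc; apply is_derive_Reals, Hd, Pc).
  destruct (MVT f id a b (fun c P => exist _ (f' c) (Hd' c P))
     (fun c _ => derivable_pt_id c) Hab Hc
     (fun c _ => derivable_continuous_pt _ _ (derivable_pt_id c))) as [c [P HP]].
  exists c; split; [exact P|].
  simpl in HP. rewrite derive_pt_id in HP. unfold id in HP. lra.
Qed.

Lemma is_derive_continuity_pt (f : R -> R) (x l : R) :
  is_derive f x l -> continuity_pt f x.
Proof.
  intros Hd. apply derivable_continuous_pt. exists l. now apply is_derive_Reals.
Qed.

Lemma Rmin_plus_Rmax p q : Rmin p q + Rmax p q = p + q.
Proof. unfold Rmin, Rmax. destruct (Rle_dec p q); ring. Qed.

Section DividedDifference.
Variables F F1 F2 : R -> R.
Hypothesis F_deriv : forall t, 0 < t -> is_derive F t (F1 t).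
Hypothesis F1_deriv : forall t, 0 < t -> is_derive F1 t (F2 t).
Hypothesis F2_antitone : forall t1 t2, 0 < t1 -> t1 <= t2 -> F2 t2 <= F2 t1.
Hypothesis F_cont0 : continuity_pt F 0.

Definition divdiff (r s : R) : R :=
  if Req_EM_T r s then F1 r else (F s - F r) / (s - r).

Lemma divdiff_sym r s : divdiff r s = divdiff s r.
Proof.
  unfold divdiff.
  destruct (Req_EM_T r s) as [e|hrs]; destruct (Req_EM_T s r) as [|hsr];
    [now subst | congruence | congruence | field; lra].
Qed.

Lemma F_cont t : 0 <= t -> continuity_pt F t.
Proof.
  intros [Ht|<-]; [|exact F_cont0].
  apply (is_derive_continuity_pt _ _ (F1 t)). now apply F_deriv.
Qed.

Lemma F1_cont t : 0 < t -> continuity_pt F1 t.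
Proof.
  intros Ht. apply (is_derive_continuity_pt _ _ (F2 t)). now apply F1_deriv.
Qed.

(* Concavity of F': F'(m+u) + F'(m-u) decreases in u on [0,m), by the mean
   value theorem on [m+u1, m+u2] and [m-u2, m-u1]. *)
Lemma sym_slope_sum_antitone m u1 u2 : 0 <= u1 < u2 -> u2 < m ->
  F1 (m + u2) + F1 (m - u2) <= F1 (m + u1) + F1 (m - u1).
Proof.
  intros h1 h2.
  destruct (mvt_open F1 F2 (m + u1) (m + u2)) as [xi [Ixi Exi]];
    [lra | intros c Hc; apply F1_deriv; lra | intros c Hc; apply F1_cont; lra |].
  destruct (mvt_open F1 F2 (m - u2) (m - u1)) as [eta [Ieta Eeta]];
    [lra | intros c Hc; apply F1_deriv; lra | intros c Hc; apply F1_cont; lra |].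
  assert (F2 xi <= F2 eta) by (apply F2_antitone; lra).
  nra.
Qed.

Definition odd_part (m u : R) : R := F (m + u) - F (m - u).

Lemma odd_part_deriv m u : 0 <= u < m ->
  is_derive (odd_part m) u (F1 (m + u) + F1 (m - u)).
Proof.
  intros Hu. unfold odd_part.
  replace (F1 (m + u) + F1 (m - u)) with (1 * F1 (m + u) - (-1) * F1 (m - u)) by ring.
  apply (is_derive_minus (fun u => F (m + u)) (fun u => F (m - u))).
  - apply (is_derive_comp F (fun u => m + u)); [apply F_deriv; lra | auto_derive; auto; ring].
  - apply (is_derive_comp F (fun u => m - u)); [apply F_deriv; lra | auto_derive; auto; ring].
Qed.

Lemma odd_part_cont m u : 0 <= u <= m -> continuity_pt (odd_part m) u.
Proof.
  intros Hu. unfold odd_part. apply continuity_pt_minus.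
  - apply (continuity_pt_comp (fun u => m + u) F).
    + apply (is_derive_continuity_pt _ _ 1). auto_derive; auto.
    + apply F_cont; lra.
  - apply (continuity_pt_comp (fun u => m - u) F).
    + apply (is_derive_continuity_pt _ _ (-1)). auto_derive; auto.
    + apply F_cont; lra.
Qed.

Lemma odd_part_mvt m u v : 0 <= u < v -> v <= m ->
  exists c, u < c < v /\
    odd_part m v - odd_part m u = (F1 (m + c) + F1 (m - c)) * (v - u).
Proof.
  intros Huv Hv.
  apply (mvt_open (odd_part m) (fun c => F1 (m + c) + F1 (m - c))); [lra | |].
  - intros c Hc. apply odd_part_deriv; lra.
  - intros c Hc. apply odd_part_cont; lra.
Qed.

Lemma odd_part_0 m : odd_part m 0 = 0.
Proof. unfold odd_part. rewrite Rplus_0_r, Rminus_0_r. ring. Qed.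

(* The centered chord slope decreases with the half-width: the average slope of
   the centered difference over [0,d] dominates its slope over [d,D]. *)
Lemma chord_antitone m d D : 0 < d < D -> D <= m ->
  odd_part m D / (2 * D) <= odd_part m d / (2 * d).
Proof.
  intros Hd HD.
  destruct (odd_part_mvt m 0 d) as [c1 [Ic1 Ec1]]; [lra | lra |].
  destruct (odd_part_mvt m d D) as [c2 [Ic2 Ec2]]; [lra | lra |].
  assert (Hslopes : F1 (m + c2) + F1 (m - c2) <= F1 (m + c1) + F1 (m - c1))
    by (apply sym_slope_sum_antitone; lra).
  rewrite odd_part_0, !Rminus_0_r in Ec1.
  replace (odd_part m d / (2 * d)) with ((F1 (m + c1) + F1 (m - c1)) / 2)
    by (rewrite Ec1; field; lra).
  apply Rle_div_l; [lra |]. unfold Rdiv. nra.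
Qed.

Lemma chord_le_slope m D : 0 < D <= m -> odd_part m D / (2 * D) <= F1 m.
Proof.
  intros HD.
  destruct (odd_part_mvt m 0 D) as [c [Ic Ec]]; [lra | lra |].
  assert (Hslopes : F1 (m + c) + F1 (m - c) <= F1 (m + 0) + F1 (m - 0))
    by (apply sym_slope_sum_antitone; lra).
  rewrite Rplus_0_r, Rminus_0_r, odd_part_0 in *.
  apply Rle_div_l; [lra |]. nra.
Qed.

Lemma divdiff_centered m u : 0 < u ->
  divdiff (m - u) (m + u) = odd_part m u / (2 * u).
Proof.
  intros Hu. unfold divdiff, odd_part.
  destruct (Req_EM_T (m - u) (m + u)) as [e|_]; [lra|].
  f_equal. ring.
Qed.

Lemma divdiff_width_antitone m d D : 0 <= d <= D -> D <= m ->
  divdiff (m - D) (m + D) <= divdiff (m - d) (m + d).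
Proof.
  intros Hd HD.
  destruct (Req_dec d D) as [<-|hdD]; [lra|].
  rewrite divdiff_centered by lra.
  destruct (Req_dec d 0) as [->|hd].
  - unfold divdiff. rewrite Rminus_0_r, Rplus_0_r.
    destruct (Req_EM_T m m) as [_|]; [|congruence].
    apply chord_le_slope; lra.
  - rewrite divdiff_centered by lra. apply chord_antitone; lra.
Qed.

Lemma divdiff_sorted r s : divdiff r s = divdiff (Rmin r s) (Rmax r s).
Proof.
  unfold Rmin, Rmax. destruct (Rle_dec r s); [reflexivity | apply divdiff_sym].
Qed.

(* Schur-concavity of the divided difference on [0,oo)^2: pairs with the same
   sum share the midpoint m, and majorization compares the half-widths. *)
Theorem divdiff_schur_concave r s r' s' :
  0 <= r -> 0 <= s -> 0 <= r' -> 0 <= s' -> majorized r s r' s' ->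
  divdiff r' s' <= divdiff r s.
Proof.
  intros hr hs hr' hs' [Hsum Hmax].
  rewrite (divdiff_sorted r s), (divdiff_sorted r' s').
  pose proof (Rmin_plus_Rmax r s). pose proof (Rmin_plus_Rmax r' s').
  assert (0 <= Rmin r' s') by (apply Rmin_glb; assumption).
  assert (Rmin r s <= Rmax r s) by (unfold Rmin, Rmax; destruct (Rle_dec r s); lra).
  set (m := (r + s) / 2).
  set (d := (Rmax r s - Rmin r s) / 2).
  set (D := (Rmax r' s' - Rmin r' s') / 2).
  replace (Rmin r s) with (m - d) by (unfold m, d; lra).
  replace (Rmax r s) with (m + d) by (unfold m, d; lra).
  replace (Rmin r' s') with (m - D) by (unfold m, D; lra).
  replace (Rmax r' s') with (m + D) by (unfold m, D; lra).
  apply divdiff_width_antitone; unfold m, d, D; lra.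
Qed.
End DividedDifference.

Lemma cosh_pos w : 0 < cosh w.
Proof. unfold cosh. pose proof (exp_pos w). pose proof (exp_pos (- w)). lra. Qed.

Lemma sinh_pos w : 0 < w -> 0 < sinh w.
Proof. intros. unfold sinh. assert (exp (- w) < exp w) by (apply exp_increasing; lra). lra. Qed.

Lemma cosh_sq_sub_sinh_sq w : cosh w ^ 2 - sinh w ^ 2 = 1.
Proof.
  unfold cosh, sinh. assert (exp w * exp (- w) = 1).
  { rewrite <- exp_plus. replace (w + - w) with 0 by ring. apply exp_0. }
  nra.
Qed.

Definition cbrt_cosh (w : R) : R := exp (ln (cosh w) / 3).

Lemma cbrt_cosh_cube w : cbrt_cosh w ^ 3 = cosh w.
Proof.
  unfold cbrt_cosh. set (y := ln (cosh w) / 3).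
  replace (exp y ^ 3) with (exp (y + y + y)) by (rewrite !exp_plus; ring).
  unfold y.
  replace (ln (cosh w) / 3 + ln (cosh w) / 3 + ln (cosh w) / 3) with (ln (cosh w)) by field.
  apply exp_ln, cosh_pos.
Qed.

(* sinh w >= w cosh^{1/3} w for w > 0: the function sinh w / cosh^{1/3} w - w
   vanishes at 0 and has derivative (T^2-1)^2 (2T^2+1) / (3T^4) >= 0,
   where T = cosh^{1/3} w and sinh^2 w = T^6 - 1. *)
Lemma sinh_ge_cbrt_cosh w : 0 < w -> w * cbrt_cosh w <= sinh w.
Proof.
  intros hw.
  set (G := fun w => sinh w / cbrt_cosh w - w).
  set (G' := fun w => cosh w / cbrt_cosh w - sinh w ^ 2 / (3 * cbrt_cosh w * cosh w) - 1).
  assert (HG : forall c, is_derive G c (G' c)).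
  { intro c. unfold G, G', cbrt_cosh. pose proof (cosh_pos c).
    auto_derive; [split; [lra | split; [apply Rgt_not_eq, exp_pos | auto]] |].
    unfold Rdiv. pose proof (exp_pos (ln (cosh c) * / 3)).
    field; lra. }
  assert (HG'_nonneg : forall c, 0 <= G' c).
  { intro c. unfold G'.
    pose proof (cosh_pos c) as hC. pose proof (cbrt_cosh_cube c) as hT3.
    pose proof (cosh_sq_sub_sinh_sq c) as hS.
    set (T := cbrt_cosh c) in *. set (C := cosh c) in *.
    assert (hT : 0 < T) by apply exp_pos.
    replace (sinh c ^ 2) with (C ^ 2 - 1) by lra. rewrite <- hT3.
    replace (T ^ 3 / T - ((T ^ 3) ^ 2 - 1) / (3 * T * T ^ 3) - 1)
      with ((T ^ 2 - 1) ^ 2 * (2 * T ^ 2 + 1) / (3 * T ^ 4)) by (field; lra).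
    apply Rdiv_le_0_compat; [| apply Rmult_lt_0_compat; [lra | apply pow_lt; lra]].
    apply Rmult_le_pos; [apply pow2_ge_0 | nra]. }
  destruct (mvt_open G G' 0 w) as [c [_ Ec]]; [lra | intros c _; apply HG |
    intros c _; apply (is_derive_continuity_pt _ _ (G' c)), HG |].
  assert (HG0 : G 0 = 0).
  { unfold G, sinh. rewrite Ropp_0, exp_0. unfold Rdiv. ring. }
  assert (HGw : 0 <= G w) by (pose proof (HG'_nonneg c); nra).
  unfold G in *. assert (hT : 0 < cbrt_cosh w) by apply exp_pos.
  assert (Hsplit : sinh w = sinh w / cbrt_cosh w * cbrt_cosh w) by (field; lra).
  nra.
Qed.

Lemma cube_cosh_le_cube_sinh w : 0 < w -> w ^ 3 * cosh w <= sinh w ^ 3.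
Proof.
  intros hw. rewrite <- cbrt_cosh_cube.
  replace (w ^ 3 * cbrt_cosh w ^ 3) with ((w * cbrt_cosh w) ^ 3) by ring.
  apply pow_incr. split; [| now apply sinh_ge_cbrt_cosh].
  pose proof (exp_pos (ln (cosh w) / 3)). unfold cbrt_cosh. nra.
Qed.

Definition inv_sq_gap (w : R) : R := / w ^ 2 - / sinh w ^ 2.

Lemma inv_sq_gap_even w : inv_sq_gap (- w) = inv_sq_gap w.
Proof.
  unfold inv_sq_gap. replace (sinh (- w)) with (- sinh w)
    by (unfold sinh; rewrite Ropp_involutive; field).
  f_equal; f_equal; ring.
Qed.

(* g is nonincreasing on (0,oo): its derivative is
   2 (w^3 cosh w - sinh^3 w) / (w^3 sinh^3 w) <= 0. *)
Lemma inv_sq_gap_antitone w1 w2 : 0 < w1 -> w1 <= w2 -> inv_sq_gap w2 <= inv_sq_gap w1.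
Proof.
  intros h1 [h2|<-]; [|lra].
  set (g' := fun w => 2 * (w ^ 3 * cosh w - sinh w ^ 3) / (w ^ 3 * sinh w ^ 3)).
  assert (Hd : forall c, 0 < c -> is_derive inv_sq_gap c (g' c)).
  { intros c Hc. pose proof (sinh_pos c Hc).
    unfold inv_sq_gap, g'. auto_derive.
    - repeat split; apply Rmult_integral_contrapositive; lra.
    - field; lra. }
  assert (Hg' : forall c, 0 < c -> g' c <= 0).
  { intros c Hc. pose proof (cube_cosh_le_cube_sinh c Hc).
    assert (0 < c ^ 3 * sinh c ^ 3)
      by (apply Rmult_lt_0_compat; apply pow_lt; [lra | now apply sinh_pos]).
    assert (0 < / (c ^ 3 * sinh c ^ 3)) by now apply Rinv_0_lt_compat.
    unfold g', Rdiv. nra. }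
  destruct (mvt_open inv_sq_gap g' w1 w2) as [c [Ic Ec]].
  - exact h2.
  - intros c Hc. apply Hd. lra.
  - intros c Hc. apply (is_derive_continuity_pt _ _ (g' c)), Hd. lra.
  - pose proof (Hg' c ltac:(lra)). nra.
Qed.

(* The logarithm of the (0,t)-mean: for a = ln x, b = ln y and t <> 0,
   psi(t) = ln ((e^{tb} - e^{ta}) / (t (b-a))) = t ln E(0,t;x,y), and psi(0) = 0.
   psi1 and psi2 are its first and second derivatives on t <> 0. *)
Section LogMean.
Variables a b : R.
Hypothesis hab : a <> b.

Definition gap (t : R) : R := exp (t * b) - exp (t * a).
Definition phi (t : R) : R := if Req_EM_T t 0 then 1 else gap t / (t * (b - a)).
Definition psi (t : R) : R := ln (phi t).
Definition psi1 (t : R) : R := (b * exp (t * b) - a * exp (t * a)) / gap t - / t.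
Definition psi2 (t : R) : R := ((b - a) / 2) ^ 2 * inv_sq_gap ((b - a) * t / 2).

Lemma gap_nonzero t : t <> 0 -> gap t <> 0.
Proof.
  intros ht Hg. unfold gap in Hg.
  assert (Hexp : exp (t * b) = exp (t * a)) by lra. apply exp_inv in Hexp.
  apply hab. apply Rmult_eq_reg_l with t; lra.
Qed.

Lemma gap_quotient_pos t : t <> 0 -> 0 < gap t / (t * (b - a)).
Proof.
  intros ht. unfold gap.
  destruct (Rlt_or_le 0 (t * (b - a))) as [Hpos|Hneg].
  - assert (exp (t * a) < exp (t * b)) by (apply exp_increasing; nra).
    apply Rdiv_lt_0_compat; lra.
  - assert (Hneg' : t * (b - a) < 0).
    { destruct Hneg as [|Hz]; [assumption|].
      exfalso. apply Rmult_integral in Hz. destruct Hz; [lra|]. apply hab; lra. }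
    assert (exp (t * b) < exp (t * a)) by (apply exp_increasing; nra).
    replace ((exp (t * b) - exp (t * a)) / (t * (b - a))) with
      ((exp (t * a) - exp (t * b)) / (- (t * (b - a)))) by (field; lra).
    apply Rdiv_lt_0_compat; lra.
Qed.

Lemma psi_nonzero t : t <> 0 -> psi t = ln (gap t / (t * (b - a))).
Proof. intros ht. unfold psi, phi. now destruct (Req_EM_T t 0). Qed.

Lemma psi_0 : psi 0 = 0.
Proof. unfold psi, phi. destruct (Req_EM_T 0 0); [apply ln_1 | congruence]. Qed.

Lemma psi_deriv t : t <> 0 -> is_derive psi t (psi1 t).
Proof.
  intros ht. apply is_derive_Reals.
  apply derivable_pt_lim_locally_ext with
    (f := fun u => ln (gap u / (u * (b - a)))) (a := Rmin 0 (2 * t)) (b := Rmax 0 (2 * t)).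
  - unfold Rmin, Rmax. destruct (Rle_dec 0 (2 * t)); lra.
  - intros z Hz. symmetry. apply psi_nonzero.
    unfold Rmin, Rmax in Hz. destruct (Rle_dec 0 (2 * t)); lra.
  - apply is_derive_Reals. pose proof (gap_nonzero t ht). pose proof (gap_quotient_pos t ht).
    unfold psi1, gap in *. auto_derive.
    + repeat split; auto. apply Rmult_integral_contrapositive; lra.
    + field. repeat split; auto; lra.
Qed.

(* psi'' = psi2 on t <> 0: after substituting e^{tb} = e^{ta} u^2 with
   u = e^{(b-a)t/2}, this is a rational identity in u. *)
Lemma psi1_deriv t : t <> 0 -> is_derive psi1 t (psi2 t).
Proof.
  intros ht. pose proof (gap_nonzero t ht) as hg. unfold psi1, gap in *.
  auto_derive; [repeat split; auto|].
  unfold psi2, inv_sq_gap, sinh.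
  set (u := exp ((b - a) * t / 2)).
  assert (hu : 0 < u) by apply exp_pos.
  assert (hA : 0 < exp (t * a)) by apply exp_pos.
  assert (Eb : exp (t * b) = exp (t * a) * u * u)
    by (unfold u; rewrite <- !exp_plus; f_equal; field).
  rewrite exp_Ropp. fold u. rewrite Eb in hg |- *.
  assert (hu1 : u * u - 1 <> 0) by (intro; apply hg; nra).
  assert (hu2 : u - / u <> 0).
  { intro Hz. apply hu1. replace (u * u - 1) with (u * (u - / u)) by (field; lra).
    rewrite Hz; ring. }
  field. repeat split; auto; lra.
Qed.

(* e^{tb} - e^{ta} has derivative b - a at 0, so phi(t) -> 1 as t -> 0. *)
Lemma gap_deriv_0 : derivable_pt_lim gap 0 (b - a).
Proof.
  apply is_derive_Reals. unfold gap. auto_derive; [auto|].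
  rewrite !Rmult_0_l, exp_0. ring.
Qed.

Lemma phi_cont0 : continuity_pt phi 0.
Proof.
  assert (hk : 0 < Rabs (b - a)) by (apply Rabs_pos_lt; lra).
  intros eps heps.
  destruct (gap_deriv_0 (eps * Rabs (b - a)) ltac:(nra)) as [del Hdel].
  exists del. split; [apply cond_pos|].
  intros z [[_ hz] hd]. simpl in hd. unfold R_dist in *. rewrite Rminus_0_r in hd.
  specialize (Hdel z (not_eq_sym hz) hd).
  rewrite Rplus_0_l in Hdel. unfold gap at 2 in Hdel.
  rewrite !Rmult_0_l, Rminus_diag, Rminus_0_r in Hdel.
  unfold phi. destruct (Req_EM_T z 0) as [|_]; [congruence|].
  destruct (Req_EM_T 0 0) as [_|]; [|congruence]. simpl. unfold R_dist.
  replace (gap z / (z * (b - a)) - 1) with ((gap z / z - (b - a)) / (b - a)) by (field; lra).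
  unfold Rdiv at 1. rewrite Rabs_mult, Rabs_inv.
  apply Rmult_lt_reg_r with (Rabs (b - a)); [exact hk|].
  rewrite Rmult_assoc, Rinv_l by lra. lra.
Qed.

Lemma psi_cont0 : continuity_pt psi 0.
Proof.
  unfold psi. apply (continuity_pt_comp phi ln); [apply phi_cont0|].
  apply derivable_continuous_pt. exists (/ phi 0). apply derivable_pt_lim_ln.
  unfold phi. destruct (Req_EM_T 0 0); [lra | congruence].
Qed.

(* psi'' is nonincreasing on (0,oo), whatever the sign of b - a (g is even). *)
Lemma psi2_antitone t1 t2 : 0 < t1 -> t1 <= t2 -> psi2 t2 <= psi2 t1.
Proof.
  intros h1 h2. unfold psi2. apply Rmult_le_compat_l; [apply pow2_ge_0|].
  destruct (Rlt_or_le 0 (b - a)) as [hk|hk].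
  - apply inv_sq_gap_antitone; nra.
  - assert (hk' : b - a < 0) by lra.
    rewrite <- (inv_sq_gap_even ((b - a) * t2 / 2)), <- (inv_sq_gap_even ((b - a) * t1 / 2)).
    apply inv_sq_gap_antitone; nra.
Qed.
End LogMean.

(* Replacing (x,y) by (1/x,1/y) and t by -t: psi is unchanged, psi' changes sign. *)
Lemma psi_reflect a b t : psi (- a) (- b) (- t) = psi a b t.
Proof.
  unfold psi, phi, gap.
  destruct (Req_EM_T (- t) 0) as [h1|h1]; destruct (Req_EM_T t 0) as [h2|h2];
    [reflexivity | lra | lra |].
  f_equal. replace (- t * - b) with (t * b) by ring. replace (- t * - a) with (t * a) by ring.
  f_equal. ring.
Qed.

Lemma psi1_reflect a b t : a <> b -> t <> 0 -> psi1 (- a) (- b) (- t) = - psi1 a b t.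
Proof.
  intros hab ht. pose proof (gap_nonzero a b hab t ht) as hg.
  unfold psi1, gap in *.
  replace (- t * - b) with (t * b) by ring. replace (- t * - a) with (t * a) by ring.
  field. split; auto; lra.
Qed.

Lemma divdiff_reflect a b r s : a <> b -> ~ (r = 0 /\ s = 0) ->
  divdiff (psi (- a) (- b)) (psi1 (- a) (- b)) (- r) (- s)
  = - divdiff (psi a b) (psi1 a b) r s.
Proof.
  intros hab hrs. unfold divdiff.
  destruct (Req_EM_T (- r) (- s)) as [e1|e1]; destruct (Req_EM_T r s) as [e2|e2].
  - subst s. apply psi1_reflect; [exact hab | tauto].
  - lra.
  - lra.
  - rewrite !psi_reflect. field. lra.
Qed.

Lemma E_equal_args r s x : E r s x x = x.
Proof. unfold E. destruct (Req_EM_T x x); [reflexivity | congruence]. Qed.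

Lemma E_exp x y r s : 0 < x -> 0 < y -> x <> y -> ~ (r = 0 /\ s = 0) ->
  E r s x y = exp (divdiff (psi (ln x) (ln y)) (psi1 (ln x) (ln y)) r s).
Proof.
  intros hx hy hxy hrs.
  assert (hab : ln x <> ln y) by (intro Hl; apply hxy, ln_inv; assumption).
  set (a := ln x) in *. set (b := ln y) in *.
  assert (Rx : forall t, Rpower x t = exp (t * a)) by reflexivity.
  assert (Ry : forall t, Rpower y t = exp (t * b)) by reflexivity.
  assert (Hg : forall t, t <> 0 -> gap a b t <> 0) by (intros; now apply gap_nonzero).
  unfold E, divdiff. fold a b.
  destruct (Req_EM_T x y) as [|_]; [congruence|].
  destruct (Req_EM_T r 0) as [->|hr]; [destruct (Req_EM_T s 0) as [->|hs] |].
  - tauto.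
  - destruct (Req_EM_T 0 s) as [|_]; [congruence|].
    rewrite (psi_nonzero a b s hs), psi_0, Rx, Ry. unfold Rpower. apply (f_equal exp).
    replace (/ s * ((exp (s * b) - exp (s * a)) / (b - a))) with (gap a b s / (s * (b - a)))
      by (unfold gap; field; lra).
    field. assumption.
  - destruct (Req_EM_T s 0) as [->|hs]; [destruct (Req_EM_T r 0) as [|_]; [congruence|] |].
    + rewrite (psi_nonzero a b r hr), psi_0, Rx, Ry. unfold Rpower. apply (f_equal exp).
      replace (/ r * ((exp (r * b) - exp (r * a)) / (b - a))) with (gap a b r / (r * (b - a)))
        by (unfold gap; field; lra).
      field. assumption.
    + destruct (Req_EM_T r s) as [<-|hrs'].
      * rewrite !Rx, !Ry. unfold Rpower. rewrite <- exp_plus. apply (f_equal exp).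
        pose proof (Hg r hr) as hgr. unfold psi1, gap in *.
        unfold Rdiv.
        rewrite ln_mult, ln_Rinv, !ln_exp by (try apply Rinv_0_lt_compat; apply exp_pos).
        field. repeat split; auto; intro; apply hgr; lra.
      * rewrite (psi_nonzero a b s hs), (psi_nonzero a b r hr), !Rx, !Ry.
        unfold Rpower. apply (f_equal exp).
        pose proof (gap_quotient_pos a b hab r hr). pose proof (gap_quotient_pos a b hab s hs).
        replace (r / s * ((exp (s * b) - exp (s * a)) / (exp (r * b) - exp (r * a))))
          with (gap a b s / (s * (b - a)) / (gap a b r / (r * (b - a))))
          by (pose proof (Hg r hr); pose proof (Hg s hs); unfold gap in *;
              field; repeat split; auto; lra).
        unfold Rdiv at 1. rewrite ln_mult, ln_Rinv by (try apply Rinv_0_lt_compat; assumption).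
        field. lra.
Qed.

Lemma E_pos x y r s : 0 < x -> 0 < y -> 0 < E r s x y.
Proof.
  intros hx hy.
  destruct (Req_dec x y) as [<-|hxy]; [now rewrite E_equal_args|].
  destruct (Req_dec r 0) as [->|hr]; [destruct (Req_dec s 0) as [->|hs] |].
  - unfold E. destruct (Req_EM_T x y); [assumption|].
    destruct (Req_EM_T 0 0); [|congruence]. apply sqrt_lt_R0. nra.
  - rewrite E_exp by (auto; tauto). apply exp_pos.
  - rewrite E_exp by (auto; tauto). apply exp_pos.
Qed.

Lemma E_reflect x y r s : 0 < x -> 0 < y -> E r s x y = / E (- r) (- s) (/ x) (/ y).
Proof.
  intros hx hy.
  assert (hx' : 0 < / x) by now apply Rinv_0_lt_compat.
  assert (hy' : 0 < / y) by now apply Rinv_0_lt_compat.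
  destruct (Req_dec x y) as [<-|hxy].
  { rewrite !E_equal_args. symmetry. apply Rinv_inv. }
  assert (hxy' : / x <> / y) by (intro Hi; apply hxy, Rinv_eq_reg, Hi).
  assert (hab : ln x <> ln y) by (intro Hl; apply hxy, ln_inv; assumption).
  destruct (Req_dec r 0) as [hr|hr]; destruct (Req_dec s 0) as [hs|hs].
  - subst r s. rewrite Ropp_0. unfold E.
    destruct (Req_EM_T x y); [congruence|]. destruct (Req_EM_T (/ x) (/ y)); [congruence|].
    destruct (Req_EM_T 0 0); [|congruence].
    rewrite <- Rinv_mult, sqrt_inv, Rinv_inv. reflexivity.
  all: rewrite (E_exp x y), (E_exp (/ x) (/ y)), !ln_Rinv, divdiff_reflect, exp_Ropp, Rinv_inv;
      auto; lra.
Qed.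

Lemma majorized_opp r s r' s' :
  majorized r s r' s' -> majorized (- r) (- s) (- r') (- s').
Proof.
  unfold majorized, Rmax. intros [Hsum Hmax]. split; [lra|].
  destruct (Rle_dec r s), (Rle_dec r' s'), (Rle_dec (- r) (- s)), (Rle_dec (- r') (- s')); lra.
Qed.

Lemma exp_le u v : u <= v -> exp u <= exp v.
Proof. intros [Huv|<-]; [left; now apply exp_increasing | right; reflexivity]. Qed.

Lemma E_schur_antitone x y r s r' s' : 0 < x -> 0 < y ->
  0 <= r -> 0 <= s -> 0 <= r' -> 0 <= s' -> majorized r s r' s' ->
  E r' s' x y <= E r s x y.
Proof.
  intros hx hy hr hs hr' hs' Hmaj.
  destruct (Req_dec x y) as [<-|hxy]; [rewrite !E_equal_args; lra|].
  assert (Hsum : r + s = r' + s') by apply Hmaj.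
  destruct (Req_dec (r + s) 0) as [Hz|Hnz].
  { replace r with 0 by lra. replace s with 0 by lra.
    replace r' with 0 by lra. replace s' with 0 by lra. lra. }
  assert (hab : ln x <> ln y) by (intro Hl; apply hxy, ln_inv; assumption).
  rewrite !E_exp by (auto; intros [? ?]; lra).
  apply exp_le.
  apply (divdiff_schur_concave _ _ (psi2 (ln x) (ln y))); auto.
  - intros t ht. apply psi_deriv; auto; lra.
  - intros t ht. apply psi1_deriv; auto; lra.
  - intros. now apply psi2_antitone.
  - now apply psi_cont0.
Qed.

(* The main theorem: the nonpositive case follows from the nonnegative one by
   the reflection identity, since 1/t is decreasing on (0,oo). *)
Theorem theorem2 (x y : R) (hx : 0 < x) (hy : 0 < y) :
  SchurConcave (fun t => 0 <= t) (fun r s => E r s x y) /\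
  SchurConvex (fun t => t <= 0) (fun r s => E r s x y).
Proof.
  split; intros r s r' s' hr hs hr' hs' Hmaj.
  - apply Ropp_le_contravar, E_schur_antitone; assumption.
  - rewrite (E_reflect x y r s), (E_reflect x y r' s') by assumption.
    apply Rinv_le_contravar; [apply E_pos; apply Rinv_0_lt_compat; assumption|].
    apply E_schur_antitone; try (apply Rinv_0_lt_compat; assumption); try lra.
    now apply majorized_opp.
Qed.
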